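(* Every drawable subset of $\mathbb{R}^2$ is a Borel set.
   Context: For $A\subseteq\mathbb{R}^2$ let $N(A)=\{x\in\mathbb{R}^2: |x-a|<1 \text{ for some } a\in A\}$. Let $\mathcal{D}_1=\{N(A_1): A_1\subseteq\mathbb{R}^2\}$ and for $n\ge 2$ let $\mathcal{D}_n=\{D\cup N(A_n): D\in\mathcal{D}_{n-1}, A_n\subseteq\mathbb{R}^2\}$ if $n$ is odd and $\mathcal{D}_n=\{D\setminus N(A_n): D\in\mathcal{D}_{n-1}, A_n\subseteq\mathbb{R}^2\}$ if $n$ is even. A set is drawable if it lies in $\mathcal{D}=\bigcup_{n\ge1}\mathcal{D}_n$. *)

(* R^2 is modelled as R * R (product topology = Euclidean topology). *)
From HB Require Import structures.
From mathcomp Require Import all_boot all_order all_algebra.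
From mathcomp Require Import all_classical all_reals all_analysis.
Set Implicit Arguments. Unset Strict Implicit. Unset Printing Implicit Defensive.
Import Order.TTheory GRing.Theory Num.Theory numFieldNormedType.Exports.
Local Open Scope classical_set_scope.
Local Open Scope ring_scope.

Definition edist2 {R : realType} (x a : R * R) : R :=
  Num.sqrt ((x.1 - a.1) ^+ 2 + (x.2 - a.2) ^+ 2).

Definition Nbhd {R : realType} (A : set (R * R)) : set (R * R) :=
  [set x | exists a, A a /\ edist2 x a < 1].

(* D n is the family D_n of the paper for n >= 1; D 0 is empty (unused). *)
Fixpoint Dfam {R : realType} (n : nat) : set (set (R * R)) :=
  match n with
  | 0 => set0
  | 1 => [set E | exists A, E = Nbhd A]
  | m.+1 => [set E | exists D0 A, Dfam m D0 /\
              E = (if odd m.+1 then D0 `|` Nbhd A else D0 `\` Nbhd A)]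
  end.

Definition drawable {R : realType} (E : set (R * R)) : Prop :=
  exists n, (1 <= n)%N /\ Dfam n E.

Definition borel2 {R : realType} (E : set (R * R)) : Prop :=
  <<s (open : set_system (R * R)) >> E.

(* N(A) is open, being a union of open unit discs, and the Borel sets form a
   σ-algebra, hence are closed under the unions and differences that build
   D_n from D_(n-1). *)
From mathcomp Require Import all_boot all_order all_algebra.
From mathcomp Require Import all_classical all_reals all_analysis.
Import Order.TTheory GRing.Theory Num.Theory numFieldNormedType.Exports.
Local Open Scope classical_set_scope.
Local Open Scope ring_scope.

Section g_sigma_algebra_closure.
Context {T : pointedType} {G : set (set T)}.

Lemma g_sigma_algebraU : setU_closed <<s G >>.
Proof. exact: (@measurableU _ (g_sigma_algebraType G)). Qed.

Lemma g_sigma_algebraD : setD_closed <<s G >>.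
Proof. exact: (@measurableD _ (g_sigma_algebraType G)). Qed.

End g_sigma_algebra_closure.

Lemma continuous_edist2 (R : realType) (a : R * R) :
  continuous (fun x : R * R => edist2 x a).
Proof.
move=> x; apply: continuous_comp; last exact: sqrt_continuous.
by apply: cvgD; apply: cvgM; apply: cvgB;
  (exact: cvg_fst || exact: cvg_snd || exact: cvg_cst).
Qed.

Lemma open_Nbhd (R : realType) (A : set (R * R)) : open (Nbhd A).
Proof.
have -> : Nbhd A = \bigcup_(a in A) ((edist2 ^~ a) @^-1` [set y | y < 1]).
  by apply/seteqP; split=> x /=; [case=> a [Aa ?] | case=> a Aa ?]; exists a.
apply: bigcup_open => a _; apply: open_comp; last exact: open_lt.
by move=> y _; exact: continuous_edist2.
Qed.

Lemma borel2_Nbhd (R : realType) (A : set (R * R)) : borel2 (Nbhd A).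
Proof. by apply: sub_sigma_algebra; exact: open_Nbhd. Qed.

Lemma borel2_Dfam {R : realType} {n : nat} {E : set (R * R)} :
  Dfam n E -> borel2 E.
Proof.
elim: n E => [//|[|m] IH] E /=; first by case=> A ->; exact: borel2_Nbhd.
case=> D0 [A [/IH D0_borel ->]].
have A_borel := borel2_Nbhd R A.
case: ifP => _.
- exact: (g_sigma_algebraU _ _ D0_borel A_borel).
- exact: (g_sigma_algebraD _ _ D0_borel A_borel).
Qed.

Theorem theorem2p2 (R : realType) (E : set (R * R)) :
  drawable E -> borel2 E.
Proof. by case=> n [_ En]; exact: (borel2_Dfam En). Qed.
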